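(* Let $x_k\in\mathbb{R}^n_{>0}$ satisfy $\mathbf 1^Tx_k\le(1+\epsilon)\mathrm{OPT}$. Then for every $t\in\{0,\dots,w-1\}$ and every $u\in\mathbb{R}^n_{\ge0}$, $$\langle\alpha\,\xi^{(t)}_k,\ x_k-u\rangle\le \alpha^2\,\mathrm{OPT}+V_{x_k}(u)-V_{x^{(t)}_{k+1}}(u).$$
   Context: Standing setup: $A\in\mathbb{R}^{m\times n}_{\ge 0}$ with no zero column; packing LP $\max\{\mathbf 1^Tx:x\ge0,Ax\le\mathbf 1\}$ with optimal value $\mathrm{OPT}$; $\epsilon\in(0,1/2]$; natural $\log$ unless $\log_2$. $\mu=\frac{\epsilon}{4\log(nm/\epsilon)}$, $p_j(x)=\exp\big(\frac{1}{\mu}((Ax)_j-1)\big)$, $f_\mu(x)=-\mathbf 1^Tx+\mu\sum_j p_j(x)$, $\nabla_i f_\mu(x)=-1+\sum_jA_{ji}p_j(x)$, $\alpha=\mu/20$, $w=\lceil\log_2(1/\epsilon)\rceil$. With $g_i=\nabla_i f_\mu(x_k)$: $\xi_k[i]=0$ if $|g_i|\le\epsilon$, $\xi_k[i]=g_i$ if $\epsilon<|g_i|\le1$, $\xi_k[i]=1$ if $g_i>1$; $\xi^{(t)}_k[i]=\xi_k[i]$ if $\epsilon2^t<|\xi_k[i]|\le\epsilon2^{t+1}$ and $0$ otherwise; $x^{(t)}_{k+1}[i]=x_k[i]\exp(-\alpha\xi^{(t)}_k[i])$. Bregman divergence: $V_x(y)=\sum_{i\in[n]}\big(y[i]\log\frac{y[i]}{x[i]}+x[i]-y[i]\big)$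 for $x>0$, $y\ge 0$ (with $0\log0=0$). *)

From Stdlib Require Import Reals Lra Lia List.
Open Scope R_scope.

(* Vectors in R^n are functions nat -> R (only indices i < n matter);
   a matrix A in R^{m x n} is A : nat -> nat -> R, entry A j i (row j < m, column i < n). *)

Definition fsum (n : nat) (f : nat -> R) : R :=
  fold_right Rplus 0 (map f (seq 0 n)).

Definition Ax (n : nat) (A : nat -> nat -> R) (x : nat -> R) (j : nat) : R :=
  fsum n (fun i => A j i * x i).

Definition packing_feasible (m n : nat) (A : nat -> nat -> R) (x : nat -> R) : Prop :=
  (forall i, (i < n)%nat -> 0 <= x i) /\
  (forall j, (j < m)%nat -> Ax n A x j <= 1).

Definition is_packing_OPT (m n : nat) (A : nat -> nat -> R) (OPT : R) : Prop :=
  (exists x, packing_feasible m n A x /\ fsum n x = OPT) /\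
  (forall x, packing_feasible m n A x -> fsum n x <= OPT).

Definition mu_param (m n : nat) (eps : R) : R :=
  eps / (4 * ln (INR n * INR m / eps)).

Definition alpha_param (m n : nat) (eps : R) : R := mu_param m n eps / 20.

(* w = ceil(log_2 (1/eps)), ceil y := - floor(- y) *)
Definition w_param (eps : R) : nat :=
  Z.to_nat (- Int_part (- (ln (1 / eps) / ln 2)))%Z.

Definition pj (m n : nat) (eps : R) (A : nat -> nat -> R) (x : nat -> R) (j : nat) : R :=
  exp (/ mu_param m n eps * (Ax n A x j - 1)).

Definition grad_fmu (m n : nat) (eps : R) (A : nat -> nat -> R) (x : nat -> R) (i : nat) : R :=
  -1 + fsum m (fun j => A j i * pj m n eps A x j).

(* xi_k[i]: 0 if |g| <= eps; g if eps < |g| <= 1; 1 if g > 1.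
   (g >= -1 always holds, so the last branch is exactly the case g > 1.) *)
Definition xi (m n : nat) (eps : R) (A : nat -> nat -> R) (x : nat -> R) (i : nat) : R :=
  let g := grad_fmu m n eps A x i in
  if Rle_dec (Rabs g) eps then 0
  else if Rle_dec (Rabs g) 1 then g
  else 1.

Definition xi_t (m n : nat) (eps : R) (A : nat -> nat -> R) (x : nat -> R) (t : nat) (i : nat) : R :=
  let v := xi m n eps A x i in
  if Rlt_dec (eps * 2 ^ t) (Rabs v) then
    (if Rle_dec (Rabs v) (eps * 2 ^ (S t)) then v else 0)
  else 0.

Definition x_next (m n : nat) (eps : R) (A : nat -> nat -> R) (x : nat -> R) (t : nat) (i : nat) : R :=
  x i * exp (- (alpha_param m n eps * xi_t m n eps A x t i)).

Definition bregman (n : nat) (x y : nat -> R) : R :=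
  fsum n (fun i => (if Req_EM_T (y i) 0 then 0 else y i * ln (y i / x i)) + x i - y i).

(* Coordinatewise, the multiplicative update x' = x e^{-z} satisfies the exact three-point
   identity  z (x - u) - (V_x(u) - V_{x'}(u)) = x (e^{-z} - 1 + z),  because
   ln(u/x') = ln(u/x) + z.  For |z| <= 1/80 the right-hand side is at most (2/3) z^2 x.
   With z = alpha xi^{(t)}_k[i], |xi| <= 1 and alpha <= 1/80, summing gives the bound
   (2/3) alpha^2 1^T x_k <= (2/3)(1 + eps) alpha^2 OPT <= alpha^2 OPT since eps <= 1/2. *)

From Stdlib Require Import Reals Lra Lia List.
Open Scope R_scope.

Lemma fsum_S n f : fsum (S n) f = fsum n f + f n.
Proof.
  unfold fsum. rewrite seq_S, map_app, fold_right_app. simpl.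
  generalize (f n). induction (map f (seq 0 n)); simpl; intros; [ring|].
  rewrite IHl. ring.
Qed.

Lemma fsum_plus n f g : fsum n (fun i => f i + g i) = fsum n f + fsum n g.
Proof. induction n; [unfold fsum; simpl; ring|]. rewrite !fsum_S, IHn; ring. Qed.

Lemma fsum_minus n f g : fsum n (fun i => f i - g i) = fsum n f - fsum n g.
Proof. induction n; [unfold fsum; simpl; ring|]. rewrite !fsum_S, IHn; ring. Qed.

Lemma fsum_scal n c f : fsum n (fun i => c * f i) = c * fsum n f.
Proof. induction n; [unfold fsum; simpl; ring|]. rewrite !fsum_S, IHn; ring. Qed.

Lemma fsum_le n f g :
  (forall i, (i < n)%nat -> f i <= g i) -> fsum n f <= fsum n g.
Proof.
  induction n; intros H; [unfold fsum; simpl; lra|]. rewrite !fsum_S.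
  assert (f n <= g n) by (apply H; lia).
  assert (fsum n f <= fsum n g) by (apply IHn; intros; apply H; lia). lra.
Qed.

Lemma fsum_nonneg n f : (forall i, (i < n)%nat -> 0 <= f i) -> 0 <= fsum n f.
Proof.
  induction n; intros H; [unfold fsum; simpl; lra|]. rewrite fsum_S.
  assert (0 <= f n) by (apply H; lia).
  assert (0 <= fsum n f) by (apply IHn; intros; apply H; lia). lra.
Qed.

(* e^{-z} = 1 / (e^{z/4})^4 <= 1 / (1 + z/4)^4, which reduces to a polynomial inequality. *)
Lemma exp_opp_le_quadratic z : Rabs z <= 1/80 -> exp (- z) <= 1 - z + 2/3 * z^2.
Proof.
  intros Hz.
  assert (Hz' : -1/80 <= z <= 1/80) by (unfold Rabs in Hz; destruct Rcase_abs; lra).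
  set (h := z/4).
  assert (Hh : -1/320 <= h <= 1/320) by (unfold h; lra).
  assert (Hpoly : 1 <= (1 + h)^4 * (1 - 4*h + 32/3*h^2)) by nra.
  assert (Hexp : exp (- z) = / (exp h ^ 4)).
  { rewrite exp_Ropp. f_equal. simpl. rewrite Rmult_1_r, <- !exp_plus.
    f_equal. unfold h. field. }
  assert (Hlin : (1 + h)^4 <= exp h ^ 4) by (apply pow_incr; split; [lra|apply exp_ineq1_le]).
  assert (Hpos : 0 < (1 + h)^4) by (apply pow_lt; lra).
  replace (1 - z + 2/3 * z^2) with (1 - 4*h + 32/3*h^2) by (unfold h; field).
  rewrite Hexp. apply (Rmult_le_reg_l (exp h ^ 4)); [lra|].
  rewrite Rinv_r by lra. nra.
Qed.

Definition bregman_coord (x y : R) : R :=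
  (if Req_EM_T y 0 then 0 else y * ln (y / x)) + x - y.

Lemma bregman_fsum n x y : bregman n x y = fsum n (fun i => bregman_coord (x i) (y i)).
Proof. reflexivity. Qed.

Lemma bregman_coord_mul_exp x y z :
  0 < x -> 0 <= y ->
  bregman_coord (x * exp (- z)) y = bregman_coord x y + z * y + x * exp (- z) - x.
Proof.
  intros Hx Hy. unfold bregman_coord. destruct Req_EM_T as [->|Hy0]; [ring|].
  replace (y / (x * exp (- z))) with (y / x * exp z)
    by (rewrite exp_Ropp; field; split; [apply Rgt_not_eq, exp_pos | lra]).
  rewrite ln_mult, ln_exp by (apply exp_pos || (apply Rdiv_lt_0_compat; lra)).
  ring.
Qed.

Lemma mul_exp_step_coord_le x y z c :
  0 < x -> 0 <= y -> Rabs z <= c -> c <= 1/80 ->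
  z * (x - y) <= 2/3 * c^2 * x + bregman_coord x y - bregman_coord (x * exp (- z)) y.
Proof.
  intros Hx Hy Hzc Hc.
  rewrite bregman_coord_mul_exp by assumption.
  assert (Hexp := exp_opp_le_quadratic z ltac:(lra)).
  assert (Hz2 : z^2 <= c^2) by (rewrite <- (pow2_abs z); apply pow_incr; split; [apply Rabs_pos|lra]).
  nra.
Qed.

Lemma mul_exp_step_le n x u g c :
  (forall i, (i < n)%nat -> 0 < x i) ->
  (forall i, (i < n)%nat -> 0 <= u i) ->
  (forall i, (i < n)%nat -> Rabs (g i) <= c) -> c <= 1/80 ->
  fsum n (fun i => g i * (x i - u i))
  <= 2/3 * c^2 * fsum n x + bregman n x u - bregman n (fun i => x i * exp (- g i)) u.
Proof.
  intros Hx Hu Hg Hc.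
  rewrite !bregman_fsum, <- fsum_scal, <- fsum_plus, <- fsum_minus.
  apply fsum_le; intros i Hi.
  apply mul_exp_step_coord_le; auto.
Qed.

Lemma Rabs_xi_t_le m n eps A x t i : Rabs (xi_t m n eps A x t i) <= 1.
Proof.
  assert (Hxi : Rabs (xi m n eps A x i) <= 1).
  { unfold xi. destruct Rle_dec; [rewrite Rabs_R0; lra|].
    destruct Rle_dec; [assumption | rewrite Rabs_R1; lra]. }
  unfold xi_t. destruct Rlt_dec; [destruct Rle_dec|]; rewrite ?Rabs_R0; lra.
Qed.

Lemma alpha_param_bound m n eps :
  (1 <= m)%nat -> (1 <= n)%nat -> 0 < eps <= 1/2 -> 0 < alpha_param m n eps <= 1/80.
Proof.
  intros Hm Hn Heps. unfold alpha_param, mu_param.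
  assert (1 <= INR n) by (apply (le_INR 1); lia).
  assert (1 <= INR m) by (apply (le_INR 1); lia).
  assert (Hratio : 2 <= INR n * INR m / eps).
  { apply (Rmult_le_reg_r eps); [lra|]. unfold Rdiv.
    rewrite Rmult_assoc, Rinv_l by lra. nra. }
  assert (HL : 1/2 <= ln (INR n * INR m / eps)).
  { assert (ln 2 <= ln (INR n * INR m / eps)).
    { destruct (Rle_lt_or_eq_dec _ _ Hratio) as [Hlt | <-]; [|lra].
      apply Rlt_le, ln_increasing; lra. }
    assert (H2 := ln_lt_2). lra. }
  set (L := ln (INR n * INR m / eps)) in *.
  split.
  - apply Rdiv_lt_0_compat; [apply Rdiv_lt_0_compat|]; lra.
  - apply (Rmult_le_reg_r (80 * L)); [lra|].
    replace (eps / (4 * L) / 20 * (80 * L)) with eps by (field; lra). lra.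
Qed.

(* Only 1^T x_k <= (1 + eps) OPT and m >= 1 (from Hcol) are used; HA, HOPT and Ht are not. *)
Theorem lemma3p7
  (m n : nat) (A : nat -> nat -> R) (OPT eps : R) (xk u : nat -> R) (t : nat)
  (Hn : (1 <= n)%nat)
  (HA : forall j i, (j < m)%nat -> (i < n)%nat -> 0 <= A j i)
  (Hcol : forall i, (i < n)%nat -> exists j, (j < m)%nat /\ A j i <> 0)
  (HOPT : is_packing_OPT m n A OPT)
  (Heps : 0 < eps <= 1 / 2)
  (Hxk : forall i, (i < n)%nat -> 0 < xk i)
  (Hval : fsum n xk <= (1 + eps) * OPT)
  (Ht : (t < w_param eps)%nat)
  (Hu : forall i, (i < n)%nat -> 0 <= u i) :
  fsum n (fun i => alpha_param m n eps * xi_t m n eps A xk t i * (xk i - u i))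
  <= (alpha_param m n eps) ^ 2 * OPT + bregman n xk u
     - bregman n (x_next m n eps A xk t) u.
Proof.
  assert (Hm : (1 <= m)%nat) by (destruct (Hcol 0%nat) as [j [Hj _]]; lia).
  set (a := alpha_param m n eps).
  assert (Ha : 0 < a <= 1/80) by (apply alpha_param_bound; assumption).
  assert (Hstep_bound : forall i, (i < n)%nat -> Rabs (a * xi_t m n eps A xk t i) <= a).
  { intros i _. rewrite Rabs_mult, (Rabs_pos_eq a) by lra.
    pose proof (Rabs_xi_t_le m n eps A xk t i). nra. }
  assert (Hstep := mul_exp_step_le n xk u _ a Hxk Hu Hstep_bound ltac:(lra)).
  assert (Hsum : 0 <= fsum n xk) by (apply fsum_nonneg; intros i Hi; apply Rlt_le, Hxk, Hi).
  assert (Hmass : 2/3 * fsum n xk <= OPT) by nra.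
  assert (Ha2 : 0 <= a^2) by (apply pow_le; lra).
  change (x_next m n eps A xk t) with (fun i => xk i * exp (- (a * xi_t m n eps A xk t i))).
  nra.
Qed.
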